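(* Let $k\in\mathbb C\setminus\mathbb Q$, $n,m\in\mathbb Z_{>0}$, $p_0=n+k^{-1}m$. For bipartitions $\alpha,\tilde\alpha\in\mathcal P_{n,m}$, $\alpha$ is $\mathcal E$-equivalent to $\tilde\alpha$ if and only if $\omega(\alpha)$ is $\mathcal R$-equivalent to $\omega(\tilde\alpha)$. In other words, the involution $\omega$ of $\mathcal P_{n,m}$ transforms the equivalence relation $\mathcal E$ into $\mathcal R$.
   Context: Partitions are identified with Young diagrams, i.e. finite sets of boxes $(i,j)\in\mathbb Z_{>0}^2$ ($i$ = row, $j$ = column) closed under moving up or left; a bipartition is a pair $\alpha=(\lambda,\mu)$ of partitions, with inclusion and set operations componentwise. For a box $x=(i,j)$, $c(x,a)=(j-1)+k(i-1)+a$, and $b_r(\alpha,k,p_0)=\sum_{x\in\lambda}c(x,0)^{r-1}+(-1)^r\sum_{y\in\mu}c(y,1+k-kp_0)^{r-1}$ for $r\ge1$. Bipartitions $\alpha,\tilde\alpha$ are $\mathcal E$-equivalent if $b_r(\alpha,k,p_0)=b_r(\tilde\alpha,k,p_0)$ for all $r\ge1$. Let $\pi(n,m)=\{(i,j):1\le i\le n,1\le j\le m\}$, $\theta(i,j)=(n-i+1,m-j+1)$ on $\pi(n,m)$, and let $\mathcal P_{n,m}$ be the set of bipartitions $(\lambda,\mu)$ with $\lambda,\mu\subset\pi(n,m)$. The involution $\omega:\mathcal P_{n,m}\to\mathcal P_{n,m}$ is $\omega(\lambda,\mu)=(\lambda,\pi(n,m)\setminus\theta(\mu))$. Bipartitions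 $(\lambda,\mu)$ and $(\tilde\lambda,\tilde\mu)$ are $\mathcal R$-equivalent if $\lambda\cap\mu=\tilde\lambda\cap\tilde\mu$ and $\lambda\cup\mu=\tilde\lambda\cup\tilde\mu$. *)

From HB Require Import structures.
From mathcomp Require Import all_boot all_order all_algebra.
From mathcomp Require Import complex.
From mathcomp Require Import Rstruct.
Set Implicit Arguments. Unset Strict Implicit. Unset Printing Implicit Defensive.
Import Order.TTheory GRing.Theory Num.Theory.
Local Open Scope ring_scope.

Definition CC : Type := (Rdefinitions.R)[i].

(* Boxes of pi(n,m) are encoded 0-indexed: the ordinal pair (a,b) : 'I_n * 'I_m
   stands for the box (i,j) = (a+1, b+1). *)
Definition box n m := ('I_n * 'I_m)%type.

Definition is_young n m (A : {set box n m}) : Prop :=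
  forall x : box n m, x \in A ->
    (forall i : 'I_n, (i <= x.1)%N -> ((i, x.2) : box n m) \in A) /\
    (forall j : 'I_m, (j <= x.2)%N -> ((x.1, j) : box n m) \in A).

Definition bipart n m := ({set box n m} * {set box n m})%type.
Definition in_P n m (al : bipart n m) : Prop := is_young al.1 /\ is_young al.2.

(* c(x,a) = (j-1) + k(i-1) + a for the box x = (i,j). *)
Definition cbox n m (k : CC) (x : box n m) (a : CC) : CC :=
  (nat_of_ord x.2)%:R + k * (nat_of_ord x.1)%:R + a.

Definition bpow n m (al : bipart n m) (k p0 : CC) (r : nat) : CC :=
  \sum_(x in al.1) cbox k x 0 ^+ r.-1
  + (-1) ^+ r * \sum_(y in al.2) cbox k y (1 + k - k * p0) ^+ r.-1.

Definition E_equiv n m (k p0 : CC) (al al' : bipart n m) : Prop :=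
  forall r : nat, (1 <= r)%N -> bpow al k p0 r = bpow al' k p0 r.

Definition theta n m (x : box n m) : box n m := (rev_ord x.1, rev_ord x.2).

Definition omega n m (al : bipart n m) : bipart n m :=
  (al.1, ~: [set theta y | y in al.2]).

Definition R_equiv n m (al al' : bipart n m) : Prop :=
  al.1 :&: al.2 = al'.1 :&: al'.2 /\ al.1 :|: al.2 = al'.1 :|: al'.2.

From HB Require Import structures.
From mathcomp Require Import all_boot all_order all_algebra.
From mathcomp Require Import complex.
From mathcomp Require Import Rstruct.
From mathcomp Require Import ring.
Import Order.TTheory GRing.Theory Num.Theory.
Local Open Scope ring_scope.
Set Implicit Arguments. Unset Strict Implicit. Unset Printing Implicit Defensive.

(* After the substitution p0 = n + m/k, the content c(y, 1 + k - k p0) of a box y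
   of mu is minus the content of theta(y), so b_{r+1}(alpha) is the power sum
   sum_x (N x - 1) c(x,0)^r, where N x in {0,1,2} counts how many components of
   omega(alpha) contain x.  Since k is irrational, the contents c(x,0) of the
   boxes of pi(n,m) are pairwise distinct, and a Vandermonde argument shows that
   these power sums determine the weights N x - 1.  Finally, N x is determined
   exactly by whether x lies in the intersection and in the union of the two
   components of omega(alpha). *)

Lemma weighted_power_sums_inj (R : idomainType) (T : finType) (c : T -> R)
    (f g : T -> R) :
  injective c ->
  (forall e, \sum_x f x * c x ^+ e = \sum_x g x * c x ^+ e) -> f =1 g.
Proof.
move=> c_inj eq_sums x0; apply/eqP; rewrite -subr_eq0; apply/eqP.
have sum_poly p : \sum_x (f x - g x) * p.[c x] = 0.
  under eq_bigr => x _ do rewrite horner_coef big_distrr.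
  rewrite exchange_big /= big1 // => i _.
  under eq_bigr => x _ do rewrite mulrCA mulrBl.
  by rewrite -big_distrr /= sumrB eq_sums subrr mulr0.
(* Evaluate against the Lagrange-type polynomial vanishing at every c y, y != x0. *)
pose P := \prod_(y | y != x0) ('X - (c y)%:P).
have P_x0 : P.[c x0] != 0.
  rewrite horner_prod prodf_seq_neq0; apply/allP => y _; apply/implyP => y_x0.
  by rewrite hornerXsubC subr_eq0; apply: contra y_x0 => /eqP/c_inj ->.
have P_y y : y != x0 -> P.[c y] = 0.
  by move=> y_x0; rewrite horner_prod (bigD1 y) //= hornerXsubC subrr mul0r.
move: (sum_poly P); rewrite (bigD1 x0) //= big1 ?addr0.
  by move/eqP; rewrite mulf_eq0 (negbTE P_x0) orbF => /eqP.
by move=> y /P_y ->; rewrite mulr0.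
Qed.

Lemma thetaK n m : involutive (@theta n m).
Proof. by case=> a b; rewrite /theta /= !rev_ordK. Qed.

Lemma cbox_inj (k : CC) n m : (forall q : rat, k <> ratr q) ->
  injective (fun x : box n m => cbox k x 0).
Proof.
move=> k_irr [a b] [a' b']; rewrite /cbox /= !addr0 => eq_c.
have [eq_a|neq_a] := eqVneq (a : nat) a'.
  move: eq_c; rewrite eq_a => /addIr/eqP; rewrite eqr_nat => /eqP eq_b.
  by congr pair; apply: val_inj.
have da : (a'%:R - a%:R : CC) != 0 by rewrite subr_eq0 eqr_nat eq_sym.
case: (k_irr ((b%:Q - b'%:Q) / (a'%:Q - a%:Q))).
rewrite fmorph_div !rmorphB /= !ratr_nat; apply: (mulIf da); rewrite divfK //.
apply/eqP; rewrite eq_sym -subr_eq0.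
have -> : b%:R - b'%:R - k * (a'%:R - a%:R) = b%:R + k * a%:R - (b'%:R + k * a'%:R) :> CC
  by ring.
by rewrite eq_c subrr.
Qed.

Lemma cbox_theta (k : CC) n m (y : box n m) : k != 0 ->
  cbox k y (1 + k - k * (n%:R + k^-1 * m%:R)) = - cbox k (theta y) 0.
Proof.
move=> k0; rewrite /cbox /theta /= !natrB ?ltn_ord // mulrDr mulrA mulfV //.
by rewrite mul1r -!natr1; ring.
Qed.

Definition bipart_mult n m (al : bipart n m) (x : box n m) : nat :=
  ((x \in al.1) + (x \in al.2))%N.

Lemma bipart_mult_omega n m (al : bipart n m) (x : box n m) :
  bipart_mult (omega al) x = ((x \in al.1) + ~~ (theta x \in al.2))%N.
Proof. by rewrite /bipart_mult /= inE (can_imset_pre _ (@thetaK n m)) inE. Qed.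

Lemma bpow_succE (k : CC) n m (al : bipart n m) r : k != 0 ->
  bpow al k (n%:R + k^-1 * m%:R) r.+1
  = \sum_x ((bipart_mult (omega al) x)%:R - 1) * cbox k x 0 ^+ r.
Proof.
move=> k0; rewrite /bpow big_mkcond [X in _ * X]big_mkcond /=.
under [X in _ * X]eq_bigr => y _ do rewrite cbox_theta //.
rewrite [X in _ * X](reindex_inj (can_inj (@thetaK n m))) /= big_distrr -big_split /=.
apply: eq_bigr => x _; rewrite thetaK bipart_mult_omega.
have signed_pow (z : CC) : (-1) ^+ r.+1 * (- z) ^+ r = - z ^+ r.
  by rewrite [(- z) ^+ r]exprNn exprS mulN1r mulNr mulrA -exprMn mulrNN mulr1 expr1n mul1r.
case: (x \in al.1); case: (theta x \in al.2); rewrite /= ?signed_pow ?mulr0.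
all: by move: (cbox k x 0 ^+ r) => t; ring.
Qed.

Lemma eq_addn_bool (a b c d : bool) :
  (a + b = c + d)%N <-> (a && b = c && d) /\ (a || b = c || d).
Proof. by case: a; case: b; case: c; case: d; split => //; case. Qed.

Lemma R_equivE n m (al al' : bipart n m) :
  R_equiv al al' <-> bipart_mult al =1 bipart_mult al'.
Proof.
split=> [[eqI eqU] x | eq_mult].
  apply/eq_addn_bool.
  by move/setP/(_ x): eqI; move/setP/(_ x): eqU; rewrite !inE.
by split; apply/setP => x; rewrite !inE; case/eq_addn_bool: (eq_mult x).
Qed.

Theorem mainTheorem2 (k : CC) (n m : nat) :
  (forall q : rat, k <> ratr q) -> (0 < n)%N -> (0 < m)%N ->
  forall al al' : bipart n m, in_P al -> in_P al' ->
  (E_equiv k (n%:R + k^-1 * m%:R) al al' <-> R_equiv (omega al) (omega al')).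
Proof.
move=> k_irr _ _ al al' _ _.
have k0 : k != 0 by apply: contra_notN (k_irr 0) => /eqP ->; rewrite rmorph0.
rewrite R_equivE; split=> [eqE x | eq_mult [|r] // _].
  have /(_ x)/addIr/eqP : (fun x => (bipart_mult (omega al) x)%:R - 1 : CC)
      =1 (fun x => (bipart_mult (omega al') x)%:R - 1).
    by apply: (weighted_power_sums_inj (cbox_inj k_irr)) => e; rewrite -!bpow_succE ?eqE.
  by rewrite eqr_nat => /eqP.
by rewrite !bpow_succE //; apply: eq_bigr => x _; rewrite eq_mult.
Qed.
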